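(* Let $x$ be a $\theta$-cyclic point and let $U\subseteq V_n$ be a minimal critical cut of $G_x$, i.e. $U$ is a critical cut and no $S\subsetneq U$ is a critical cut of $G_x$. Then $G_x^U$ (with the point $x^U$) contains no critical cut.
   Context: $\mathrm{SUBT}(K_n)=\{x\in[0,1]^{E_n}: x(\delta(\{i\}))=2\ \forall i,\ x(\delta(U))\ge2\ \forall\,\emptyset\ne U\subsetneq V_n\}$ where $K_n$ is the complete graph on $V_n=\{1,\ldots,n\}$ with edge set $E_n$ and $\delta(U)$ is the set of edges with exactly one endpoint in $U$. $G_x=(V_n,E_x)$, $E_x=\{e:x_e>0\}$. A $\theta$-cyclic point ($0<\theta\le\frac12$) is $x\in\mathrm{SUBT}(K_n)\cap\{0,\theta,1-\theta,1\}^{E_n}$ with $G_x$ of maximum degree at most 3 and every vertex incident to an edge of $x$-value 1. A cut $U$ of a graph with vertex set $V$ is proper if $|U|\ge2$ and $|V\setminus U|\ge2$. A critical cut is a proper cut $U$ with $|\delta(U)|=3$, exactly one edge of $\delta(U)$ of $x$-value 1, and the edges of $\delta(U)$ having pairwise distinct endpoints in $U$ and pairwise distinct endpoints outside $U$. $G_x^U$ is obtained from $G_x$ by identifying all vertices of $V_n\setminus U$ into a single vertex $v_{\overline U}$ and deleting loops; $x^U$ assigns each edge of $G_x^U$ its $x$-value. *)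

From HB Require Import structures.
From mathcomp Require Import all_boot all_order all_algebra.
Set Implicit Arguments. Unset Strict Implicit. Unset Printing Implicit Defensive.
Import Order.TTheory GRing.Theory Num.Theory.
Local Open Scope ring_scope.

(* Vertex set V_n = 'I_n.  An (undirected) edge {i,j} of K_n is represented
   by the ordered pair (i,j) with i < j. *)
Definition E_n (n : nat) : {set 'I_n * 'I_n} := [set e : 'I_n * 'I_n | (e.1 < e.2)%N].

Definition deltaK (n : nat) (U : {set 'I_n}) : {set 'I_n * 'I_n} :=
  [set e in E_n n | (e.1 \in U) != (e.2 \in U)].

(* SUBT(K_n); x is given on all pairs, only its values on E_n matter. *)
Definition in_SUBT (R : numDomainType) (n : nat) (x : 'I_n * 'I_n -> R) : Prop :=
  [/\ (forall e, e \in E_n n -> 0 <= x e <= 1),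
      (forall i : 'I_n, \sum_(e in deltaK [set i]) x e = 2) &
      (forall U : {set 'I_n}, U != set0 -> U != setT ->
          2 <= \sum_(e in deltaK U) x e)].

Definition E_x (R : numDomainType) (n : nat) (x : 'I_n * 'I_n -> R) :
  {set 'I_n * 'I_n} := [set e in E_n n | 0 < x e].

Definition theta_cyclic (R : numDomainType) (n : nat) (theta : R)
  (x : 'I_n * 'I_n -> R) : Prop :=
  [/\ 0 < theta /\ theta <= 2^-1, in_SUBT x,
      (forall e, e \in E_n n ->
         [|| x e == 0, x e == theta, x e == 1 - theta | x e == 1]),
      (forall i : 'I_n, (#|[set e in E_x x | (e.1 == i) || (e.2 == i)]| <= 3)%N) &
      (forall i : 'I_n, exists2 e, e \in E_x x & ((e.1 == i) || (e.2 == i)) && (x e == 1))].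

(* Generic finite multigraph: vertex set [vs] in a finType [VT], edge set [es]
   in a finType [ET], endpoint map [ends], edge values [w]. *)
Section Generic.
Variables (R : numDomainType) (VT ET : finType).
Variables (vs : {set VT}) (es : {set ET}) (ends : ET -> VT * VT) (w : ET -> R).

Definition cut_edges (W : {set VT}) : {set ET} :=
  [set e in es | ((ends e).1 \in W) != ((ends e).2 \in W)].

Definition end_in (W : {set VT}) (e : ET) : VT :=
  if (ends e).1 \in W then (ends e).1 else (ends e).2.
Definition end_out (W : {set VT}) (e : ET) : VT :=
  if (ends e).1 \in W then (ends e).2 else (ends e).1.

Definition proper_cut (W : {set VT}) : Prop :=
  [/\ W \subset vs, (2 <= #|W|)%N & (2 <= #|vs :\: W|)%N].

Definition critical_cut (W : {set VT}) : Prop :=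
  [/\ proper_cut W,
      #|cut_edges W| = 3%N,
      #|[set e in cut_edges W | w e == 1]| = 1%N,
      {in cut_edges W &, injective (end_in W)} &
      {in cut_edges W &, injective (end_out W)}].
End Generic.

Definition crit_Gx (R : numDomainType) (n : nat) (x : 'I_n * 'I_n -> R)
  (W : {set 'I_n}) : Prop :=
  critical_cut [set: 'I_n] (E_x x) id x W.

(* G_x^U : vertices of V_n \ U are identified to the single vertex [None];
   vertices of U are [Some i].  Edges are the edges of G_x not having both
   endpoints outside U (those become loops and are deleted); an edge keeps its
   x-value. *)
Definition contr (n : nat) (U : {set 'I_n}) (i : 'I_n) : option 'I_n :=
  if i \in U then Some i else None.

Definition verts_GxU (n : nat) (U : {set 'I_n}) : {set option 'I_n} :=
  [set contr U i | i : 'I_n].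

Definition edges_GxU (R : numDomainType) (n : nat) (x : 'I_n * 'I_n -> R)
  (U : {set 'I_n}) : {set 'I_n * 'I_n} :=
  [set e in E_x x | (e.1 \in U) || (e.2 \in U)].

Definition ends_GxU (n : nat) (U : {set 'I_n}) (e : 'I_n * 'I_n) :
  option 'I_n * option 'I_n := (contr U e.1, contr U e.2).

Definition crit_GxU (R : numDomainType) (n : nat) (x : 'I_n * 'I_n -> R)
  (U : {set 'I_n}) (W : {set option 'I_n}) : Prop :=
  critical_cut (verts_GxU U) (edges_GxU x U) (ends_GxU U) x W.

From HB Require Import structures.
From mathcomp Require Import all_boot all_order all_algebra.
Import Order.TTheory GRing.Theory Num.Theory.
Set Implicit Arguments. Unset Strict Implicit. Unset Printing Implicit Defensive.
Local Open Scope ring_scope.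

(* Suppose W were a critical cut of G_x^U.  Since the complement
   of a critical cut is again a critical cut (same cut edges, with the roles
   of inner and outer endpoints exchanged), we may assume that the contracted
   vertex v_{\bar U} lies outside W.  Then W corresponds to the set
   S = {i in U | i in W} ([lift_side W] below) of vertices of G_x: the contraction restricts to a
   bijection between delta(S) in G_x and delta(W) in G_x^U which preserves
   x-values and commutes with taking inner/outer endpoints.  Hence S is a
   critical cut of G_x; it is proper because |S| >= |W| >= 2 and
   V_n \ S contains V_n \ U, and S is strictly contained in U because the
   complement of W in G_x^U has a vertex other than v_{\bar U}.  This
   contradicts the minimality of U. *)

Lemma inj_in_factor {A B C : Type} {P : {pred A}} {g : A -> C} (f : B -> C)
    {h : A -> B} :
  {in P &, injective g} -> {in P, forall a, g a = f (h a)} ->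
  {in P &, injective h}.
Proof. by move=> gI gfh a b Pa Pb hab; apply: gI; rewrite ?gfh ?hab. Qed.
Arguments inj_in_factor {A B C P g} f {h}.

Section CriticalComplement.
Variables (R : numDomainType) (VT ET : finType).
Variables (vs : {set VT}) (es : {set ET}) (ends : ET -> VT * VT) (w : ET -> R).

Hypothesis ends_in_vs :
  forall e, e \in es -> ((ends e).1 \in vs) && ((ends e).2 \in vs).

Lemma cut_edges_setC (W : {set VT}) :
  cut_edges es ends (vs :\: W) = cut_edges es ends W.
Proof.
apply/setP => e; rewrite !inE; case esE: (e \in es) => //=.
case/andP: (ends_in_vs esE) => -> ->; rewrite !andbT.
by case: (_ \in W); case: (_ \in W).
Qed.

Lemma end_in_setC (W : {set VT}) :
  {in es, end_in ends (vs :\: W) =1 end_out ends W}.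
Proof.
move=> e /ends_in_vs /andP[e1 _]; rewrite /end_in /end_out !inE e1 andbT.
by case: (_ \in W).
Qed.

Lemma end_out_setC (W : {set VT}) :
  {in es, end_out ends (vs :\: W) =1 end_in ends W}.
Proof.
move=> e /ends_in_vs /andP[e1 _]; rewrite /end_in /end_out !inE e1 andbT.
by case: (_ \in W).
Qed.

Lemma critical_cut_setC (W : {set VT}) :
  critical_cut vs es ends w W -> critical_cut vs es ends w (vs :\: W).
Proof.
move=> [[sWvs W2 W2c] cut3 cut1 inI outI].
have cutC := cut_edges_setC W.
have cut_es : {subset cut_edges es ends W <= es}.
  by move=> e; rewrite inE => /andP[].
split; [split | | | |]; rewrite ?cutC ?subsetDl //.
- by rewrite setDDr setDv set0U (setIidPr sWvs).
- by apply: (inj_in_factor id outI) => e /cut_es /end_in_setC.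
- by apply: (inj_in_factor id inI) => e /cut_es /end_out_setC.
Qed.
End CriticalComplement.

Section Contraction.
Variables (R : numDomainType) (n : nat) (x : 'I_n * 'I_n -> R).
Variable U : {set 'I_n}.

(* G_x^U is a genuine graph on its vertex set, so complements of its cuts
   are cuts with the same edges. *)
Lemma ends_GxU_in_verts (e : 'I_n * 'I_n) :
  ((ends_GxU U e).1 \in verts_GxU U) && ((ends_GxU U e).2 \in verts_GxU U).
Proof. by apply/andP; split; apply: imset_f. Qed.

Lemma verts_GxU_Some (i : 'I_n) : (Some i \in verts_GxU U) = (i \in U).
Proof.
apply/imsetP/idP => [[j _]|iU]; last by exists i; rewrite // /contr iU.
by rewrite /contr; case: ifP => // jU [->].
Qed.

Definition lift_side (W : {set option 'I_n}) : {set 'I_n} :=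
  [set i in U | Some i \in W].

Variable W : {set option 'I_n}.
Hypothesis outside_W : None \notin W.

Lemma lift_side_sub : lift_side W \subset U.
Proof. by apply/subsetP => i; rewrite inE => /andP[]. Qed.

Lemma contr_in_lift_side (i : 'I_n) : (contr U i \in W) = (i \in lift_side W).
Proof. by rewrite /contr inE; case: (i \in U) => //; apply/negbTE. Qed.

Lemma cut_edges_lift_side :
  cut_edges (edges_GxU x U) (ends_GxU U) W = cut_edges (E_x x) id (lift_side W).
Proof.
apply/setP => e; rewrite [in LHS]inE /= !contr_in_lift_side.
move: (lift_side W) lift_side_sub => S /subsetP sSU; rewrite !inE.
case S1: (e.1 \in S); case S2: (e.2 \in S);
  by rewrite ?andbF //= ?(sSU _ S1) ?(sSU _ S2) ?orbT ?andbT.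
Qed.

Lemma end_in_lift_side (e : 'I_n * 'I_n) :
  end_in (ends_GxU U) W e = contr U (end_in id (lift_side W) e).
Proof. by rewrite /end_in /= contr_in_lift_side; case: ifP. Qed.

Lemma end_out_lift_side (e : 'I_n * 'I_n) :
  end_out (ends_GxU U) W e = contr U (end_out id (lift_side W) e).
Proof. by rewrite /end_out /= contr_in_lift_side; case: ifP. Qed.

Lemma card_lift_side : W \subset verts_GxU U -> (#|W| <= #|lift_side W|)%N.
Proof.
move=> sWV; rewrite -[#|lift_side W|](card_imset _ (@Some_inj _)).
apply: subset_leq_card.
apply/subsetP => -[i|] iW; last by move: outside_W; rewrite iW.
by rewrite imset_f // inE iW -verts_GxU_Some (subsetP sWV).
Qed.

(* If the complement of W in G_x^U has two vertices, one of them is a vertex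
   of U missed by lift_side W. *)
Lemma lift_side_proper :
  (2 <= #|verts_GxU U :\: W|)%N -> lift_side W \proper U.
Proof.
move=> C2.
have [k kC] : exists k, Some k \in verts_GxU U :\: W.
  case/card_gt1P: C2 => -[i|] [[j|] [iC jC ij]];
  by [exists i | exists j | rewrite eqxx in ij].
move: kC; rewrite !inE verts_GxU_Some => /andP[kW kU].
rewrite properE lift_side_sub; apply/subsetPn; exists k => //.
by rewrite inE (negbTE kW) andbF.
Qed.

Lemma critical_lift_side :
  (2 <= #|[set: 'I_n] :\: U|)%N -> crit_GxU x U W -> crit_Gx x (lift_side W).
Proof.
move=> U2c [[sWV W2 _] cut3 cut1 inI outI].
split; [split | | | |]; rewrite -?cut_edges_lift_side ?subsetT //.
- exact: leq_trans W2 (card_lift_side sWV).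
- exact: leq_trans U2c (subset_leq_card (setDS _ lift_side_sub)).
- by apply: (inj_in_factor (contr U) inI) => e _; apply: end_in_lift_side.
- by apply: (inj_in_factor (contr U) outI) => e _; apply: end_out_lift_side.
Qed.
End Contraction.

Theorem mainTheorem11 (R : realFieldType) (n : nat) (theta : R)
  (x : 'I_n * 'I_n -> R) (U : {set 'I_n}) :
  theta_cyclic theta x ->
  crit_Gx x U ->
  (forall S : {set 'I_n}, S \proper U -> ~ crit_Gx x S) ->
  forall W : {set option 'I_n}, ~ crit_GxU x U W.
Proof.
move=> _ [[_ _ U2c] _ _ _ _] minU W critW.
(* By complement symmetry, W may be assumed to avoid v_{\bar U}. *)
wlog outW : W critW / None \notin W.
  move=> hyp; have [inW|] := boolP (None \in W); last exact: hyp critW.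
  apply: (hyp (verts_GxU U :\: W)); last by rewrite inE inW.
  by apply: critical_cut_setC critW => e _; apply: ends_GxU_in_verts.
have [[_ _ W2c] _ _ _ _] := critW.
apply: (minU (lift_side U W)); first exact: lift_side_proper.
exact: critical_lift_side.
Qed.
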